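(* $\mathfrak C_R \not\subseteq \mathfrak m^2$ if and only if $a_n \ge c_R$.
   Context: Let $k$ be a field and let $(R,\mathfrak m)$ be a complete local noetherian domain of dimension $1$ containing $k$ with $R/\mathfrak m = k$, with normalization $\overline R$ having residue field $k$, so $\overline R = k[[t]]$ and $R \subseteq k[[t]]$ is finite birational. Let $v$ be the $t$-adic valuation. For $A \subseteq k((t))$ let $v(A) = \{v(f): f\in A\setminus\{0\}\}$. The conductor is $\mathfrak C_R = \{x \in \overline R : x\overline R \subseteq R\} = t^{c_R}\overline R$, where $c_R$ is the conductor degree. The Herzog–Kunz sequence of $R$ is $v(\mathfrak m)\setminus v(\mathfrak m^2)$ listed increasingly as $a_1 < \cdots < a_n$. *)

(* Formal power series k[[t]] over a field k are modelled as
   coefficient functions nat -> k (equality of series = equality of functions). *)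
From HB Require Import structures.
From mathcomp Require Import all_boot all_order all_algebra.
From Stdlib Require Import List.
Set Implicit Arguments. Unset Strict Implicit. Unset Printing Implicit Defensive.
Import GRing.Theory.
Local Open Scope ring_scope.

Definition series (k : fieldType) := nat -> k.

Definition szero (k : fieldType) : series k := fun _ => 0.
Definition sconst (k : fieldType) (a : k) : series k :=
  fun n => if n is 0%N then a else 0.
Definition sadd (k : fieldType) (f g : series k) : series k := fun n => f n + g n.
Definition sopp (k : fieldType) (f : series k) : series k := fun n => - f n.
Definition smul (k : fieldType) (f g : series k) : series k :=
  fun n => \sum_(i < n.+1) f i * g (n - i)%N.

Definition sum_prods (k : fieldType) (ps : list (series k * series k)) : series k :=
  foldr (fun p acc => sadd (smul p.1 p.2) acc) (szero k) ps.

Record subalgebra (k : fieldType) (R : series k -> Prop) : Prop := {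
  sub_const : forall a : k, R (sconst a);
  sub_add : forall f g, R f -> R g -> R (sadd f g);
  sub_opp : forall f, R f -> R (sopp f);
  sub_mul : forall f g, R f -> R g -> R (smul f g) }.

Definition finite_over (k : fieldType) (R : series k -> Prop) : Prop :=
  exists gs : list (series k), forall f : series k,
    exists rs : list (series k),
      length rs = length gs /\ (forall r, In r rs -> R r) /\
      f = sum_prods (combine rs gs).

Definition birational (k : fieldType) (R : series k -> Prop) : Prop :=
  forall f : series k, exists a b, R a /\ R b /\ b <> szero k /\ smul f b = a.

Definition max_ideal (k : fieldType) (R : series k -> Prop) (x : series k) : Prop :=
  R x /\ x 0%N = 0.

Definition max_ideal_sq (k : fieldType) (R : series k -> Prop) (x : series k) : Prop :=
  exists ps : list (series k * series k),
    (forall p, In p ps -> max_ideal R p.1 /\ max_ideal R p.2) /\ x = sum_prods ps.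

Definition conductor (k : fieldType) (R : series k -> Prop) (x : series k) : Prop :=
  forall y : series k, R (smul x y).

Definition conductor_degree (k : fieldType) (R : series k -> Prop) (c : nat) : Prop :=
  forall x : series k, conductor R x <-> (forall i, (i < c)%N -> x i = 0).

Definition has_val (k : fieldType) (f : series k) (a : nat) : Prop :=
  f a <> 0 /\ forall i, (i < a)%N -> f i = 0.

Definition vals (k : fieldType) (A : series k -> Prop) (a : nat) : Prop :=
  exists f, A f /\ has_val f a.

Definition in_HK (k : fieldType) (R : series k -> Prop) (a : nat) : Prop :=
  vals (max_ideal R) a /\ ~ vals (max_ideal_sq R) a.

Definition last_HK (k : fieldType) (R : series k -> Prop) (a : nat) : Prop :=
  in_HK R a /\ forall b, in_HK R b -> (b <= a)%N.

(* If [a_n < c], then every [s >= c] lies in [v(m)] (via [t^s], which is in the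
   conductor) but not in the Herzog–Kunz sequence, hence in [v(m^2)]. Starting
   from an element of the conductor, i.e. of order [>= c], one subtracts
   elements of [m^2] of the same leading order until the order reaches [2c];
   there [f = t^c * (f / t^c)] is a product of two elements of [m].
   Conversely, if [a_n >= c] then [t^(a_n)] lies in the conductor, and its
   valuation [a_n] is not in [v(m^2)]. *)
From mathcomp Require Import all_boot all_order all_algebra.
From Stdlib Require Import List Classical FunctionalExtensionality.
Set Implicit Arguments. Unset Strict Implicit. Unset Printing Implicit Defensive.
Import GRing.Theory.
Local Open Scope ring_scope.

Definition tpow (k : fieldType) (s : nat) : series k :=
  fun n => if n == s then 1 else 0.

Definition sscale (k : fieldType) (a : k) (f : series k) : series k :=
  fun n => a * f n.

Definition vanish_below (k : fieldType) (f : series k) (s : nat) : Prop :=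
  forall i, (i < s)%N -> f i = 0.

Section SeriesAlgebra.

Variable k : fieldType.
Implicit Types (f g : series k) (a : k).

Lemma smul_sconstl a f : smul (sconst a) f = sscale a f.
Proof.
apply: functional_extensionality => n; rewrite /smul /sscale big_ord_recl /= subn0.
by rewrite big1 ?addr0 // => i _; rewrite /bump add1n mul0r.
Qed.

Lemma smul_sconst1r f : smul f (sconst 1) = f.
Proof.
apply: functional_extensionality => n; rewrite /smul big_ord_recr /= subnn mulr1.
rewrite big1 ?add0r // => -[i /= lt_in] _; rewrite /sconst.
case E: (n - i)%N => [|m]; last by rewrite mulr0.
by move/eqP: E; rewrite subn_eq0 leqNgt lt_in.
Qed.

Lemma smul_sscalel a f g : smul (sscale a f) g = sscale a (smul f g).
Proof.
apply: functional_extensionality => n; rewrite /smul /sscale mulr_sumr.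
by apply: eq_bigr => i _; rewrite mulrA.
Qed.

Lemma sum_prods_cat (ps qs : list (series k * series k)) n :
  sum_prods (ps ++ qs) n = sum_prods ps n + sum_prods qs n.
Proof.
elim: ps => [|p ps IH] /=; first by rewrite /szero add0r.
by rewrite /sadd IH addrA.
Qed.

Lemma sum_prods_scalel a (ps : list (series k * series k)) n :
  sum_prods (map (fun p => (sscale a p.1, p.2)) ps) n = a * sum_prods ps n.
Proof.
elim: ps => [|p ps IH] /=; first by rewrite /szero mulr0.
by rewrite /sadd IH smul_sscalel /sscale mulrDr.
Qed.

Lemma tpow_vanish_below s c : (c <= s)%N -> vanish_below (tpow k s) c.
Proof.
move=> le_cs i lt_ic; rewrite /tpow; case: eqP => // E.
by move: lt_ic; rewrite E ltnNge le_cs.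
Qed.

Lemma has_val_tpow s : has_val (tpow k s) s.
Proof.
split; last exact: tpow_vanish_below.
by rewrite /tpow eqxx; apply/eqP; exact: oner_neq0.
Qed.

Lemma tpow0 s : (0 < s)%N -> tpow k s 0 = 0.
Proof. by move=> s_gt0; apply: (tpow_vanish_below s_gt0). Qed.

Lemma smul_tpow_shift c f :
  vanish_below f c -> smul (tpow k c) (fun n => f (n + c)%N) = f.
Proof.
move=> f_c; apply: functional_extensionality => n; rewrite /smul.
case: (ltnP n c) => le_cn.
  rewrite f_c // big1 // => i _; rewrite /tpow.
  case: eqP => [Ei|]; last by rewrite mul0r.
  by move: (ltn_ord i); rewrite Ei ltnS leqNgt le_cn.
have lt_cn1 : (c < n.+1)%N by rewrite ltnS.
rewrite (bigD1 (Ordinal lt_cn1)) //= big1 ?addr0; first by rewrite /tpow eqxx mul1r subnK.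
move=> i /eqP neq_ic; rewrite /tpow; case: eqP => [E|]; last by rewrite mul0r.
by case: neq_ic; apply: val_inj.
Qed.

End SeriesAlgebra.

Section Conductor.

Variables (k : fieldType) (R : series k -> Prop) (c : nat).
Hypotheses (hR : subalgebra R) (hc : conductor_degree R c).

Lemma conductor_sub x : conductor R x -> R x.
Proof. by move=> Cx; have := Cx (sconst 1); rewrite smul_sconst1r. Qed.

Lemma conductor_tpow s : (c <= s)%N -> conductor R (tpow k s).
Proof. by move=> le_cs; apply/hc; apply: tpow_vanish_below. Qed.

Lemma max_ideal_tpow s : (c <= s)%N -> (0 < s)%N -> max_ideal R (tpow k s).
Proof. by move=> le_cs s_gt0; split; [apply/conductor_sub/conductor_tpow | exact: tpow0]. Qed.

Lemma max_ideal_sq_addZ f g a :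
  max_ideal_sq R f -> max_ideal_sq R g -> max_ideal_sq R (fun n => f n + a * g n).
Proof.
move=> [ps [mps ->]] [qs [mqs ->]].
exists (ps ++ map (fun p => (sscale a p.1, p.2)) qs); split.
  move=> p /(in_app_or _ _ _) [/mps //|/(in_map_iff _ _ _) [q [<- qs_q]] /=].
  have [[Rq1 q10] mq2] := mqs q qs_q; split => //; split; last by rewrite /sscale q10 mulr0.
  by rewrite -smul_sconstl; apply: sub_mul => //; apply: sub_const.
by apply: functional_extensionality => n; rewrite sum_prods_cat sum_prods_scalel.
Qed.

Lemma max_ideal_sq_vanish_below_2c f :
  (0 < c)%N -> vanish_below f (c + c) -> max_ideal_sq R f.
Proof.
move=> c_gt0 f_2c.
have f_c : vanish_below f c by move=> i lt_ic; apply: f_2c; apply: ltn_addr.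
exists [:: (tpow k c, fun n => f (n + c)%N)]; split.
  move=> p [<-|[]] /=; split; first exact: max_ideal_tpow.
  split; last by rewrite add0n; apply: f_2c; rewrite -[X in (X < _)%N]addn0 ltn_add2l.
  by apply/conductor_sub/hc => i lt_ic; apply: f_2c; rewrite ltn_add2r.
apply: functional_extensionality => n.
by rewrite /= /sadd /szero addr0 smul_tpow_shift.
Qed.

Lemma conductor_sub_max_ideal_sq :
  (0 < c)%N -> (forall s, (c <= s)%N -> vals (max_ideal_sq R) s) ->
  forall x, conductor R x -> max_ideal_sq R x.
Proof.
move=> c_gt0 vm2 x /hc x_c.
suff order_ind j : forall s f, (c + c <= s + j)%N -> (c <= s)%N ->
    vanish_below f s -> max_ideal_sq R f by exact: (order_ind c c x (leqnn _) (leqnn c) x_c).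
elim: j => [|j IH] s f le_2c_sj le_cs f_s.
  apply: max_ideal_sq_vanish_below_2c => // i lt_i2c; apply: f_s.
  by apply: leq_trans lt_i2c _; rewrite addn0 in le_2c_sj.
have [g [m2g [gs_neq0 g_s]]] := vm2 s le_cs.
pose lam := f s / g s.
(* [f] is [f - lam g] plus [lam g], and [f - lam g] vanishes up to order [s]. *)
have m2_sub : max_ideal_sq R (fun n => f n + - lam * g n).
  apply: (IH s.+1); [by rewrite addSnnS | exact: leqW |].
  move=> i; rewrite ltnS leq_eqVlt => /orP [/eqP ->|lt_is].
    by rewrite /lam mulNr divfK ?subrr //; apply/eqP.
  by rewrite f_s // g_s // mulr0 addr0.
have -> : f = (fun n => (f n + - lam * g n) + lam * g n).
  by apply: functional_extensionality => n; rewrite mulNr addrNK.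
exact: max_ideal_sq_addZ.
Qed.

Lemma vals_max_ideal_sq_above_HK an s :
  last_HK R an -> (an < s)%N -> (c <= s)%N -> vals (max_ideal_sq R) s.
Proof.
move=> [_ an_max] lt_an_s le_cs; apply: NNPP => not_m2s.
have s_gt0 : (0 < s)%N by apply: leq_ltn_trans lt_an_s.
have m_s : vals (max_ideal R) s.
  by exists (tpow k s); split; [exact: max_ideal_tpow | exact: has_val_tpow].
by move: (an_max s (conj m_s not_m2s)); rewrite leqNgt lt_an_s.
Qed.

End Conductor.

Theorem mainTheorem7 (k : fieldType) (R : series k -> Prop)
  (hR : subalgebra R) (hfin : finite_over R) (hbir : birational R)
  (c : nat) (hc : conductor_degree R c) (an : nat) (han : last_HK R an) :
  ~ (forall x, conductor R x -> max_ideal_sq R x) <-> (c <= an)%N.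
Proof.
split=> [C_not_m2 | le_c_an C_m2].
  rewrite leqNgt; apply/negP => lt_an_c; apply: C_not_m2.
  apply: conductor_sub_max_ideal_sq => //; first exact: leq_ltn_trans lt_an_c.
  move=> s le_cs; exact: (vals_max_ideal_sq_above_HK hc han (leq_trans lt_an_c le_cs)).
apply: han.1.2; exists (tpow k an); split; last exact: has_val_tpow.
by apply: C_m2; apply: conductor_tpow.
Qed.
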